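(* Let $F$ be a finite field with $q$ elements and let $C\subseteq F^n$ be a balanced code with information length $d$. For a positive integer $n'$, let $C^{n'}=\{(\mathbf{c}_1,\dots,\mathbf{c}_{n'})\mid \mathbf{c}_i\in C\}\subseteq (F^n)^{n'}=F^{nn'}$. Then $C^{n'}$ is a balanced code of $F^{nn'}$ with information length $dn'$; in particular, if $0\le\delta\le 1-q^{-1}$, then $|(C^{n'})^{\le\delta}|\le q^{dn'h_q(\delta)}$, where $(C^{n'})^{\le\delta}$ is the set of codewords of $C^{n'}$ with relative weight at most $\delta$.
   Context: The relative weight of $\mathbf{a}\in F^N$ is $\mathrm{w}(\mathbf{a})/N$ where $\mathrm{w}$ is Hamming weight. For $I=\{1,\dots,N\}$ and a subset $I'=\{i_1<\dots<i_d\}$, the projection $F^I\to F^{I'}$ sends $(a_1,\dots,a_N)$ to $(a_{i_1},\dots,a_{i_d})$. A subset $C\subseteq F^N$ is a balanced code with information length $d$ if there exist subsets $I_1,\dots,I_s$ of $I$ (repetitions allowed), each of cardinality $d$, and an integer $t$ such that (i) every index $i\in I$ lies in exactly $t$ of the sets $I_j$; (ii) for each $j$, the projection $F^I\to F^{I_j}$ maps $C$ bijectively onto $F^{I_j}$. The $q$-ary entropy is $h_q(x)=x\log_q(q-1)-x\log_q x-(1-x)\log_q(1-x)$ with $0\log_q0=0$. *)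

From HB Require Import structures.
From mathcomp Require Import all_boot all_order all_algebra.
From mathcomp Require Import all_classical all_reals.
From mathcomp Require Import exp.
Set Implicit Arguments. Unset Strict Implicit. Unset Printing Implicit Defensive.
Import Order.TTheory GRing.Theory Num.Theory.
Local Open Scope ring_scope.

(* Words of length N over F are row vectors 'rV[F]_N; the index set I is 'I_N. *)

Definition hweight (F : fieldType) (N : nat) (a : 'rV[F]_N) : nat :=
  #|[set i : 'I_N | a 0 i != 0]|.

Definition relweight (R : realType) (F : fieldType) (N : nat) (a : 'rV[F]_N) : R :=
  (hweight a)%:R / N%:R.

(* projection F^I -> F^{I'}, I' = {i_1 < ... < i_d}:
   (a_1,...,a_N) |-> (a_{i_1},...,a_{i_d});  enum A lists A in increasing order. *)
Definition proj (F : fieldType) (N : nat) (A : {set 'I_N}) (a : 'rV[F]_N)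
  : 'rV[F]_#|A| := \row_(k < #|A|) a 0 (enum_val k).

Definition balanced (F : finFieldType) (N : nat) (C : {set 'rV[F]_N}) (d : nat)
  : Prop :=
  exists (s : nat) (Is : 'I_s -> {set 'I_N}) (t : nat),
    (0 < s)%N /\
    (forall j, #|Is j| = d) /\
    (forall i : 'I_N, #|[set j | i \in Is j]| = t) /\
    (forall j, {in C &, injective (@proj F N (Is j))}
               /\ [set @proj F N (Is j) c | c in C] = [set: 'rV[F]_#|Is j|]).

(* C^{n'} ⊆ (F^n)^{n'} = F^{n n'}, (c_1,...,c_{n'}) identified with the
   concatenation, realized as mxvec of the n' x n matrix with rows c_i. *)
Definition code_power (F : finFieldType) (n n' : nat) (C : {set 'rV[F]_n})
  : {set 'rV[F]_(n' * n)} :=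
  [set mxvec M | M in [set M : 'M[F]_(n', n) | [forall i, row i M \in C]]].

Definition xlogq (R : realType) (q : nat) (x : R) : R :=
  if x == 0 then 0 else x * ln x / ln q%:R.

Definition hq (R : realType) (q : nat) (x : R) : R :=
  x * ln (q%:R - 1) / ln q%:R - xlogq q x - xlogq q (1 - x).

Definition low_weight (R : realType) (F : finFieldType) (N : nat)
  (C : {set 'rV[F]_N}) (delta : R) : {set 'rV[F]_N} :=
  [set c in C | relweight R c <= delta].

From Pilot Require Import Defs.
From HB Require Import structures.
From mathcomp Require Import all_boot all_order all_algebra.
From mathcomp Require Import all_classical all_reals.
From mathcomp Require Import sequences exp lra.
Import Order.TTheory GRing.Theory Num.Theory.
Local Open Scope ring_scope.
Set Implicit Arguments. Unset Strict Implicit. Unset Printing Implicit Defensive.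

(* If C is balanced through the information sets I_j, then C^n'
   is balanced through the sets {rows} x I_j.  For the weight bound, let each
   m_j be the distribution on C obtained by pulling back the product of q-ary
   symmetric distributions (0 with probability 1 - delta, each other symbol
   with probability delta/(q-1)) along the bijection C -> F^I_j.  Since every
   coordinate lies in exactly t of the I_j, the geometric mean of the m_j(c)
   is the full product measure of c raised to t/s = d/N, which for a word of
   relative weight at most delta is at least q^(-d h_q(delta)).  Averaging the
   m_j therefore gives a probability distribution on C in which every
   low-weight codeword has mass at least q^(-d h_q(delta)) (AM-GM). *)

Lemma proj_eqP (F : fieldType) N (A : {set 'I_N}) (a b : 'rV[F]_N) :
  Defs.proj A a = Defs.proj A b <-> {in A, forall i, a 0 i = b 0 i}.
Proof.
split=> [eq_ab i iA|eq_ab].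
  have := congr1 (fun v : 'rV_#|A| => v 0 (enum_rank_in iA i)) eq_ab.
  by rewrite /Defs.proj !mxE enum_rankK_in.
by apply/rowP=> k; rewrite !mxE; apply: eq_ab; exact: enum_valP.
Qed.

Lemma proj_surjP (F : finFieldType) N (A : {set 'I_N}) (C : {set 'rV[F]_N}) :
  [set Defs.proj A c | c in C] = [set: 'rV[F]_#|A|] <->
  forall g : 'I_N -> F, exists2 c, c \in C & {in A, forall i, c 0 i = g i}.
Proof.
split=> [surj g|ext].
  have : Defs.proj A (\row_i g i) \in [set Defs.proj A c | c in C].
    by rewrite surj inE.
  case/imsetP=> c cC /esym/proj_eqP eq_gc; exists c => // i iA.
  by rewrite eq_gc // mxE.
apply/setP=> y; rewrite inE; apply/imsetP.
have [c cC eq_cy] := ext (fun i => if @idP (i \in A) is ReflectT iA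
                                   then y 0 (enum_rank_in iA i) else 0).
exists c => //; apply/rowP=> k; rewrite mxE eq_cy ?enum_valP //.
by case: {-}_ / idP => [iA|]; [rewrite enum_valK_in | rewrite enum_valP].
Qed.

Lemma sum_rV_prod (R : comSemiRingType) (F : finFieldType) k (f : F -> R) :
  \sum_(y : 'rV[F]_k) \prod_(i < k) f (y 0 i) = (\sum_x f x) ^+ k.
Proof.
rewrite -[k in RHS]card_ord -prodr_const bigA_distr_bigA /=.
pose to_ffun (y : 'rV[F]_k) := [ffun i => y 0 i].
have to_ffun_bij : {on [pred g | true], bijective to_ffun}.
  exists (fun g => \row_i g i) => [y _|g _].
    by apply/rowP => i; rewrite mxE ffunE.
  by apply/ffunP => i; rewrite ffunE mxE.
rewrite (reindex to_ffun to_ffun_bij); apply: eq_bigr => y _.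
by apply: eq_bigr => i _; rewrite ffunE.
Qed.

Lemma sum_prod_proj (R : comSemiRingType) (F : finFieldType) N (A : {set 'I_N})
    (C : {set 'rV[F]_N}) (f : F -> R) :
  {in C &, injective (Defs.proj A)} ->
  [set Defs.proj A c | c in C] = [set: 'rV[F]_#|A|] ->
  \sum_(c in C) \prod_(i in A) f (c 0 i) = (\sum_x f x) ^+ #|A|.
Proof.
move=> proj_inj proj_surj; rewrite -sum_rV_prod.
have prod_proj (c : 'rV[F]_N) : \prod_(i in A) f (c 0 i) =
                   \prod_(k < #|A|) f (Defs.proj A c 0 k).
  rewrite (big_enum_val (fun i => f (c 0 i))).
  by apply: eq_bigr => k _; rewrite mxE.
rewrite (eq_bigr _ (fun c _ => prod_proj c)).
pose G (y : 'rV_#|A|) := \prod_(k < #|A|) f (y 0 k).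
rewrite -(big_imset G proj_inj) proj_surj.
by apply: eq_bigl => y; rewrite inE.
Qed.

Lemma double_count N s (Is : 'I_s -> {set 'I_N}) :
  (\sum_j #|Is j| = \sum_(i : 'I_N) #|[set j | i \in Is j]|)%N.
Proof.
under eq_bigr do rewrite -sum1_card big_mkcond.
under [RHS]eq_bigr do rewrite -sum1_card big_mkcond.
rewrite exchange_big; apply: eq_bigr => i _; apply: eq_bigr => j _.
by rewrite inE.
Qed.

Lemma prodrX_cover (R : comSemiRingType) N s (Is : 'I_s -> {set 'I_N}) t
    (f : 'I_N -> R) :
  (forall i, #|[set j | i \in Is j]| = t) ->
  (\prod_i f i) ^+ t = \prod_j \prod_(i in Is j) f i.
Proof.
move=> cover; rewrite -prodrXl.
transitivity (\prod_i \prod_j (if i \in Is j then f i else 1)).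
  apply: eq_bigr => i _; rewrite -big_mkcond -(cover i) -prodr_const.
  by apply: eq_bigl => j; rewrite inE.
by rewrite exchange_big; apply: eq_bigr => j _; rewrite [RHS]big_mkcond.
Qed.

Lemma mxvec_index_inj m n : injective (uncurry (@mxvec_index m n)).
Proof.
have [g gK _] := @curry_mxvec_bij m n => x y eq_xy.
by rewrite -(gK x) ?inE // -(gK y) ?inE // eq_xy.
Qed.

Lemma balanced_code_power (F : finFieldType) n d n' (C : {set 'rV[F]_n}) :
  balanced C d -> balanced (code_power n' C) (d * n').
Proof.
case=> s [Is [t [s_gt0 [card_Is [cover_Is proj_Is]]]]].
pose J j : {set 'I_(n' * n)} :=
  uncurry (@mxvec_index n' n) @: finset.setX [set: 'I_n'] (Is j).
have inJ j r i : (mxvec_index r i \in J j) = (i \in Is j).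
  apply/imsetP/idP => [[[r' i'] + eq_ri]|iI]; last first.
    by exists (r, i); rewrite ?inE.
  case: (@mxvec_index_inj _ _ (r, i) (r', i') eq_ri) => _ <-.
  by rewrite inE => /andP[].
exists s, J, t; split=> //; split=> [j|].
  rewrite card_imset; last exact: mxvec_index_inj.
  by rewrite cardsX cardsT card_ord card_Is mulnC.
split=> [p|j].
  case/mxvec_indexP: p => r i; rewrite -(cover_Is i).
  by apply: eq_card => j; rewrite !inE inJ.
have [proj_inj proj_surj] := proj_Is j; split.
  move=> _ _ /imsetP[M + ->] /imsetP[M' + ->].
  rewrite !inE => /forallP MC /forallP M'C /proj_eqP eq_MM'.
  congr mxvec; apply/row_matrixP => r; apply: proj_inj => //.
  apply/proj_eqP => i iI; rewrite !mxE -(mxvecE M) -(mxvecE M').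
  by apply: eq_MM'; rewrite inJ.
apply/proj_surjP => g.
have /fin_all_exists2[c cC eq_cg] : forall r : 'I_n', exists2 c, c \in C &
    {in Is j, forall i, c 0 i = g (mxvec_index r i)}.
  by move=> r; exact: (proj_surjP _ _).1 proj_surj _.
exists (mxvec (\matrix_(r, i) c r 0 i)).
  apply/imsetP; exists (\matrix_(r, i) c r 0 i) => //; rewrite inE.
  apply/forallP => r; suff -> : row r (\matrix_(r, i) c r 0 i) = c r by [].
  by apply/rowP => i; rewrite !mxE.
move=> p; case/mxvec_indexP: p => r i; rewrite inJ => iI.
by rewrite mxvecE mxE eq_cg.
Qed.

Lemma prod_hweight (R : comSemiRingType) (F : fieldType) N (c : 'rV[F]_N)
    (a b : R) :
  \prod_i (if c 0 i == 0 then a else b) = a ^+ (N - hweight c) * b ^+ hweight c.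
Proof.
have card_nz : #|[pred i : 'I_N | c 0 i != 0]| = hweight c.
  by apply: eq_card => i; rewrite inE.
have card_z : #|[pred i : 'I_N | c 0 i == 0]| = (N - hweight c)%N.
  have := cardC [pred i : 'I_N | c 0 i == 0]; rewrite card_ord.
  have -> : #|[predC [pred i : 'I_N | c 0 i == 0]]| = hweight c.
    by rewrite -card_nz; apply: eq_card.
  move=> cardE; apply/eqP; rewrite -(eqn_add2r (hweight c)) cardE subnK //.
  by rewrite -[X in (_ <= X)%N]cardE leq_addl.
rewrite (bigID (fun i => c 0 i == 0)) /=.
rewrite (eq_bigr (fun=> a)) => [|i ->//].
rewrite [X in _ * X](eq_bigr (fun=> b)) => [|i /negbTE ->//].
by rewrite !prodr_const card_z card_nz.
Qed.

Lemma hq_mul_ln (R : realType) q (delta : R) : (1 < q)%N -> 0 < delta < 1 ->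
  hq q delta * ln q%:R =
  delta * ln (q%:R - 1) - delta * ln delta - (1 - delta) * ln (1 - delta).
Proof.
move=> q_gt1 /andP[d_gt0 d_lt1].
have lnq_neq0 : ln (q%:R : R) != 0 by rewrite gt_eqF // ln_gt0 // ltr1n.
by rewrite /hq /xlogq gt_eqF // subr_eq0 eq_sym lt_eqF // !mulrBl !divfK.
Qed.

(* The right-hand side is the probability of a word of weight [w] under the
   q-ary symmetric distribution with error rate [delta]. *)
Lemma entropy_le_word_prob (R : realType) q N w (delta : R) :
    (1 < q)%N -> 0 <= delta -> delta <= 1 - q%:R^-1 ->
    (w <= N)%N -> w%:R <= delta * N%:R ->
  q%:R `^ (- (N%:R * hq q delta)) <=
    (1 - delta) ^+ (N - w) * (delta / (q%:R - 1)) ^+ w.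
Proof.
move=> q_gt1 d_ge0 d_le w_le_N w_le.
have q_gt1R : (1 : R) < q%:R by rewrite ltr1n.
have q_gt0 : (0 : R) < q%:R by lra.
have [d0|d_neq0] := eqVneq delta 0.
  move: w_le; rewrite d0 mul0r lern0 => /eqP->.
  rewrite /hq /xlogq eqxx !subr0 oner_eq0 ln1.
  by rewrite !(mul0r, mulr0, subr0, oppr0) powRr0 expr1n expr0 mulr1.
have d_gt0 : 0 < delta by rewrite lt_def d_neq0.
have dq_le : delta * q%:R <= q%:R - 1.
  by have := ler_wpM2r (ltW q_gt0) d_le; rewrite mulrBl mul1r mulVf ?gt_eqF.
set a := 1 - delta; set b := delta / (q%:R - 1).
have a_gt0 : 0 < a by rewrite subr_gt0; nra.
have b_gt0 : 0 < b by rewrite divr_gt0 // subr_gt0.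
have b_le_a : b <= a by rewrite ler_pdivrMr ?subr_gt0 // /a; nra.
have lnb : ln b = ln delta - ln (q%:R - 1).
  by rewrite lnM ?lnV // posrE ?invr_gt0 subr_gt0.
have gap : 0 <= (delta * N%:R - w%:R) * (ln a - ln b).
  by apply: mulr_ge0; rewrite subr_ge0 // ler_ln.
have -> : a ^+ (N - w) * b ^+ w = expR ((N - w)%:R * ln a + w%:R * ln b).
  by rewrite expRD !expRM_natl !lnK // posrE.
rewrite /powR gt_eqF // ler_expR natrB // mulNr -mulrA.
rewrite hq_mul_ln ?d_gt0 -/a //=; last by rewrite -subr_gt0.
by move: gap; rewrite lnb /a; nra.
Qed.

(* By AM-GM each [c] in [S] has mass at least [L] for the average of the
   distributions [m j]. *)
Lemma card_mul_geomean_le1 (R : realFieldType) (T : finType) s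
    (m : 'I_s -> T -> R) (C S : {set T}) (L : R) :
    (0 < s)%N -> S \subset C -> 0 <= L ->
    (forall j c, 0 <= m j c) -> (forall j, \sum_(c in C) m j c = 1) ->
    {in S, forall c, L ^+ s <= \prod_j m j c} ->
  #|S|%:R * L <= 1.
Proof.
move=> s_gt0 subSC L_ge0 m_ge0 m_sum1 geomean_ge.
pose mean c := (\sum_j m j c) / s%:R.
have mean_ge0 c : 0 <= mean c by rewrite divr_ge0 ?sumr_ge0.
have L_le_mean c : c \in S -> L <= mean c.
  move=> cS; rewrite -(ler_pXn2r s_gt0) ?nnegrE //.
  apply: le_trans (geomean_ge c cS) _.
  have [+ _] := leif_AGM (A := predT) (fun j _ => m_ge0 j c).
  by rewrite card_ord.
rewrite mulr_natl -sumr_const; apply: le_trans (ler_sum _ L_le_mean) _.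
apply: le_trans (_ : \sum_(c in C) mean c <= _).
  rewrite [leLHS]big_mkcond [leRHS]big_mkcond /=; apply: ler_sum => c _.
  case: ifPn => [cS|_]; first by rewrite (fintype.subsetP subSC).
  by case: (c \in C).
rewrite -mulr_suml exchange_big /=.
under eq_bigr do rewrite m_sum1.
by rewrite sumr_const card_ord divff // pnatr_eq0 -lt0n.
Qed.

Lemma hweight_le (F : fieldType) N (c : 'rV[F]_N) : (hweight c <= N)%N.
Proof. by rewrite /hweight (leq_trans (max_card _)) ?card_ord. Qed.

Lemma relweight_le (R : realType) (F : fieldType) N (c : 'rV[F]_N) (delta : R) :
  relweight R c <= delta -> (hweight c)%:R <= delta * N%:R.
Proof.
case: N c => [|N] c; last by rewrite /relweight ler_pdivrMr ?ltr0n.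
by have := hweight_le c; rewrite leqn0 => /eqP->; rewrite mulr0.
Qed.

Definition qsym_prob (R : realType) (F : finFieldType) (delta : R) (x : F)
  : R :=
  if x == 0 then 1 - delta else delta / (#|F|%:R - 1).

Lemma qsym_prob_ge0 (R : realType) (F : finFieldType) (delta : R) (x : F) :
  0 <= delta <= 1 -> 0 <= qsym_prob delta x.
Proof.
case/andP=> d_ge0 d_le1; rewrite /qsym_prob; case: eqP => _; first lra.
by rewrite divr_ge0 // subr_ge0 ler1n ltnW // card_finNzRing_gt1.
Qed.

Lemma sum_qsym_prob (R : realType) (F : finFieldType) (delta : R) :
  \sum_(x : F) qsym_prob delta x = 1.
Proof.
have q_gt1 : (1 < #|F|)%N := card_finNzRing_gt1 F.
rewrite (bigD1 0) //= {1}/qsym_prob eqxx.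
rewrite (eq_bigr (fun=> delta / (#|F|%:R - 1))) => [|x /negbTE x_neq0].
  rewrite sumr_const cardC1 -[_ *+ _.-1]mulr_natr -subn1 natrB ?(ltnW q_gt1) //.
  by rewrite divfK ?subrK // subr_eq0 pnatr_eq1 gtn_eqF.
by rewrite /qsym_prob x_neq0.
Qed.

Lemma balanced_low_weight_bound (R : realType) (F : finFieldType) N
    (C : {set 'rV[F]_N}) d (delta : R) :
    balanced C d -> 0 <= delta -> delta <= 1 - (#|F|%:R)^-1 ->
  (#|low_weight C delta|%:R : R) <= #|F|%:R `^ (d%:R * hq #|F| delta).
Proof.
case=> s [Is [t [s_gt0 [card_Is [cover_Is proj_Is]]]]] d_ge0 d_le.
set q := #|F|; have q_gt1 : (1 < q)%N := card_finNzRing_gt1 F.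
have q_gt0 : (0 : R) < q%:R by rewrite ltr0n ltnW.
have d_le1 : delta <= 1 by rewrite (le_trans d_le) // gerBl invr_ge0 ltW.
have qsym_ge0 x : 0 <= qsym_prob delta x by rewrite qsym_prob_ge0 ?d_ge0.
have powRX (y : R) k : (q%:R `^ y) ^+ k = q%:R `^ (y * k%:R).
  by rewrite powRrM powR_mulrn ?powR_ge0.
have tN_sd : (t * N = s * d)%N.
  have := double_count Is; rewrite (eq_bigr _ (fun j _ => card_Is j)).
  rewrite (eq_bigr _ (fun i _ => cover_Is i)) !sum_nat_const !card_ord.
  by move=> ->; rewrite mulnC.
pose m j (c : 'rV[F]_N) := \prod_(i in Is j) qsym_prob delta (c 0 i).
pose L := q%:R `^ (- (d%:R * hq q delta)).
suff : #|low_weight C delta|%:R * L <= 1.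
  by rewrite -ler_pdivlMr ?powR_gt0 // /L powRN invrK mul1r.
apply: (card_mul_geomean_le1 (m := m) (C := C)) => //.
- by apply/fintype.subsetP => c; rewrite inE => /andP[].
- exact: powR_ge0.
- by move=> j c; apply: prodr_ge0.
- move=> j; have [proj_inj proj_surj] := proj_Is j.
  by rewrite sum_prod_proj // sum_qsym_prob expr1n.
move=> c; rewrite inE => /andP[_ /relweight_le w_le].
have -> : L ^+ s = (q%:R `^ (- (N%:R * hq q delta))) ^+ t.
  rewrite /L !powRX !mulNr mulrAC [in RHS]mulrAC -!natrM.
  by rewrite [(d * s)%N]mulnC -tN_sd mulnC.
rewrite /m -(prodrX_cover _ cover_Is) lerXn2r ?nnegrE ?powR_ge0 ?prodr_ge0 //.
by rewrite /qsym_prob prod_hweight entropy_le_word_prob ?hweight_le.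
Qed.

Theorem corollary3p5 (R : realType) (F : finFieldType) (n d n' : nat)
  (C : {set 'rV[F]_n}) :
  balanced C d -> (0 < n')%N ->
  balanced (code_power n' C) (d * n') /\
  (forall delta : R, 0 <= delta -> delta <= 1 - (#|F|%:R)^-1 ->
     (#|low_weight (code_power n' C) delta|%:R : R)
       <= powR (#|F|%:R) ((d * n')%:R * hq #|F| delta)).
Proof.
move=> /(balanced_code_power n') balanced_power _; split=> // delta.
exact: balanced_low_weight_bound.
Qed.
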